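(* Let $K$ be a field, $m\ge2$, $d_1,\ldots,d_m$ positive integers, and let $I_2(D)\subset S=K[x_1,\ldots,x_m,y_1,\ldots,y_m]$ be the ideal generated by the $2$-minors of the matrix $D=\begin{pmatrix}x_1^{d_1}&\cdots&x_m^{d_m}\\ y_1^{d_1}&\cdots&y_m^{d_m}\end{pmatrix}$. Then $\mathrm{bar}(I_2(D))=\frac{m(m-1)}{2}$.
   Context: $\mathrm{bar}(I)$ denotes the binomial arithmetical rank: the least integer $s$ such that there exist binomials $B_1,\ldots,B_s\in I$ with $\mathrm{rad}(I)=\mathrm{rad}(B_1,\ldots,B_s)$. *)

From mathcomp Require Import all_boot all_algebra.
From mathcomp Require Import mpoly.
Set Implicit Arguments. Unset Strict Implicit. Unset Printing Implicit Defensive.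
Import GRing.Theory.
Local Open Scope ring_scope.

Definition in_ideal (K : fieldType) (n : nat) (gs : seq {mpoly K[n]})
  (f : {mpoly K[n]}) : Prop :=
  exists c : 'I_(size gs) -> {mpoly K[n]},
    f = \sum_(i < size gs) c i * gs`_i.

Definition in_rad_ideal (K : fieldType) (n : nat) (gs : seq {mpoly K[n]})
  (f : {mpoly K[n]}) : Prop :=
  exists k : nat, in_ideal gs (f ^+ k).

Definition same_radical (K : fieldType) (n : nat) (gs hs : seq {mpoly K[n]}) : Prop :=
  forall f, in_rad_ideal gs f <-> in_rad_ideal hs f.

Definition binomial (K : fieldType) (n : nat) (p : {mpoly K[n]}) : Prop :=
  (size (msupp p) <= 2)%N.

Definition bar_eq (K : fieldType) (n : nat) (gs : seq {mpoly K[n]}) (s : nat) : Prop :=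
  (exists B : seq {mpoly K[n]},
      size B = s /\ (forall b, b \in B -> binomial b /\ in_ideal gs b)
      /\ same_radical gs B)
  /\ (forall B : seq {mpoly K[n]},
      (forall b, b \in B -> binomial b /\ in_ideal gs b) ->
      same_radical gs B -> (s <= size B)%N).

Definition xv (K : fieldType) (m : nat) (i : 'I_m) : {mpoly K[m + m]} :=
  'X_(lshift m i).
Definition yv (K : fieldType) (m : nat) (i : 'I_m) : {mpoly K[m + m]} :=
  'X_(rshift m i).

Definition minorD (K : fieldType) (m : nat) (d : 'I_m -> nat) (i j : 'I_m)
  : {mpoly K[m + m]} :=
  xv K i ^+ d i * yv K j ^+ d j - xv K j ^+ d j * yv K i ^+ d i.

Definition I2D_pairs (m : nat) : seq ('I_m * 'I_m) :=
  [seq ij <- [seq (i, j) | i <- enum 'I_m, j <- enum 'I_m] | (val ij.1 < val ij.2)%N].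

Definition I2D (K : fieldType) (m : nat) (d : 'I_m -> nat) : seq {mpoly K[m + m]} :=
  [seq minorD K d ij.1 ij.2 | ij <- I2D_pairs m].

From Pilot Require Import Defs.
From mathcomp Require Import all_boot all_algebra.
From mathcomp Require Import mpoly.
From mathcomp Require Import zify.
Set Implicit Arguments. Unset Strict Implicit. Unset Printing Implicit Defensive.
Import GRing.Theory.
Local Open Scope ring_scope.

(* The minors themselves give bar <= m(m-1)/2.  Conversely, let B be binomials
   of I_2(D) with rad(B) = rad(I_2(D)).  For a pair of columns i < j, setting
   every variable outside columns i, j to 0 keeps the minor [i j] nonzero, so
   some b in B survives this substitution.  Such a binomial vanishes on the
   0/1-point supported on columns i, j (which lies in V(I_2(D))), hence all its
   monomials only involve the variables of columns i, j.  A binomial chosen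
   for two different pairs would thus only involve the variables of at most
   one column; but substitution to such a set of variables kills every minor,
   hence kills b itself.  So b is chosen by at most one pair. *)

Lemma rmorph_in_ideal_eq0 (K : fieldType) (n : nat) (R : pzRingType)
    (f : {rmorphism {mpoly K[n]} -> R}) (gs : seq {mpoly K[n]}) b :
  {in gs, forall g, f g = 0} -> in_ideal gs b -> f b = 0.
Proof.
move=> f_gs [c ->]; rewrite rmorph_sum big1 // => i _.
by rewrite rmorphM (f_gs gs`_i) ?mulr0 // mem_nth.
Qed.

Lemma in_ideal_mem (K : fieldType) (n : nat) (gs : seq {mpoly K[n]}) g :
  g \in gs -> in_ideal gs g.
Proof.
move=> g_gs; exists (fun k => ((k : nat) == index g gs)%:R).
have g_idx : (index g gs < size gs)%N by rewrite index_mem.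
rewrite (bigD1 (Ordinal g_idx)) //= eqxx mul1r nth_index // big1 ?addr0 //.
by move=> k; rewrite -val_eqE /= => /negbTE ->; rewrite mul0r.
Qed.

Section KeepVars.
Variables (K : fieldType) (n : nat).
Implicit Types (S : pred 'I_n) (u : 'X_{1..n}) (p : {mpoly K[n]}).

Definition msupported S u : bool := [forall i, (u i != 0)%N ==> S i].

Lemma prod_restrict_pow (R : comPzSemiRingType) S (x : 'I_n -> R) u :
  \prod_(i < n) (if S i then x i else 0) ^+ u i
  = if msupported S u then \prod_(i < n) x i ^+ u i else 0.
Proof.
case: ifP => [/forallP Su | /negbT/forallPn [i]].
  apply: eq_bigr => i _; case: ifP => // Si.
  by have := Su i; rewrite Si implybF negbK => /eqP->; rewrite !expr0.
rewrite negb_imply => /andP[ui Si].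
by rewrite (bigD1 i) //= (negbTE Si) expr0n (negbTE ui) mul0r.
Qed.

Lemma msupportedI S1 S2 u :
  msupported S1 u -> msupported S2 u -> msupported (predI S1 S2) u.
Proof.
move=> /forallP S1u /forallP S2u; apply/forallP => i; apply/implyP => ui.
by rewrite inE (implyP (S1u i)) ?(implyP (S2u i)).
Qed.

Definition keep_vars S : n.-tuple {mpoly K[n]} :=
  [tuple if S i then 'X_i else 0 | i < n].

Lemma comp_keep_varsX S u :
  'X_[u] \mPo keep_vars S = if msupported S u then 'X_[u] else 0.
Proof.
rewrite comp_mpolyX; under eq_bigr do rewrite tnth_mktuple.
by rewrite prod_restrict_pow -mpolyXE_id.
Qed.

Lemma comp_keep_varsXU S i : 'X_i \mPo keep_vars S = if S i then 'X_i else 0.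
Proof. by rewrite comp_mpolyXU -tnth_nth tnth_mktuple. Qed.

Lemma comp_keep_vars_id S p :
  {in msupp p, forall u, msupported S u} -> p \mPo keep_vars S = p.
Proof.
move=> Sp; rewrite comp_mpolyEX [RHS]mpolyE; apply: eq_big_seq => u pu.
by rewrite comp_keep_varsX Sp.
Qed.

Lemma comp_keep_vars_eq0 S p :
  {in msupp p, forall u, ~~ msupported S u} -> p \mPo keep_vars S = 0.
Proof.
move=> Sp; rewrite comp_mpolyEX big1_seq // => u /andP[_ pu].
by rewrite comp_keep_varsX (negbTE (Sp u pu)) scaler0.
Qed.

Lemma meval_indicatorE S p :
  p.@[fun i => (S i)%:R] = \sum_(u <- msupp p) p@_u * (msupported S u)%:R.
Proof.
rewrite mevalE; apply: eq_bigr => u _; congr (_ * _).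
transitivity (\prod_(i < n) (if S i then 1 else 0) ^+ u i : K).
  by apply: eq_bigr => i _; case: (S i).
rewrite prod_restrict_pow; case: (msupported S u) => //.
by rewrite big1 // => i _; rewrite expr1n.
Qed.

(* At the indicator point of S a polynomial evaluates to the sum of the
   coefficients of its S-supported monomials; for a binomial with exactly one
   such monomial this is a single nonzero coefficient. *)
Lemma binomial_msupported S p :
  Defs.binomial p -> p.@[fun i => (S i)%:R] = 0 -> has (msupported S) (msupp p) ->
  {in msupp p, forall u, msupported S u}.
Proof.
move=> p_bin p_S /hasP[w pw Sw] u pu; apply/negPn/negP => nSu.
have uw : u != w by apply: contraNneq nSu => ->.
move: p_S; rewrite meval_indicatorE (bigD1_seq w) ?msupp_uniq //= Sw mulr1.
rewrite big1_seq ?addr0 => [p_w|z /andP[zw pz]].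
  by move: pw; rewrite mcoeff_msupp p_w eqxx.
case Sz: (msupported S z); last by rewrite mulr0.
have zu : z != u by apply: contraNneq nSu => <-; rewrite Sz.
have : (size [:: z; u; w] <= size (msupp p))%N.
  apply: uniq_leq_size; first by rewrite /= !inE negb_or zu zw uw.
  by move=> x; rewrite !inE => /or3P[] /eqP->.
by move=> /leq_trans /(_ p_bin).
Qed.

End KeepVars.

Lemma count_ltn_iota a m : (a < m)%N ->
  count (fun k => a < k)%N (iota 0 m) = (m - a.+1)%N.
Proof.
move=> am; rewrite -{1}(subnKC am) iotaD count_cat add0n.
rewrite (@eq_in_count _ _ pred0) ?count_pred0; last first.
  by move=> k; rewrite mem_iota add0n => /andP[_]; rewrite ltnNge => /negbTE ->.
rewrite add0n (@eq_in_count _ _ predT) ?count_predT ?size_iota //.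
by move=> k; rewrite mem_iota => /andP[].
Qed.

Lemma mem_I2D_pairs m (ij : 'I_m * 'I_m) :
  (ij \in I2D_pairs m) = (ij.1 < ij.2)%N.
Proof.
rewrite mem_filter andb_idr // => _.
by apply/allpairsP; exists ij; rewrite !mem_enum; case: ij.
Qed.

Lemma uniq_I2D_pairs m : uniq (I2D_pairs m).
Proof.
apply/filter_uniq/allpairs_uniq; try exact: enum_uniq.
by move=> [? ?] [? ?].
Qed.

Lemma size_I2D_pairs m : size (I2D_pairs m) = 'C(m, 2).
Proof.
rewrite size_filter count_flatten -map_comp sumnE big_map big_enum /=.
rewrite (reindex_inj rev_ord_inj) /= -bin2_sum big_mkord.
apply: eq_bigr => i _; rewrite count_map.
rewrite -[count _ _]/(count (preim val (fun k => (m - i.+1 < k)%N)) (enum 'I_m)).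
rewrite -count_map val_enum_ord count_ltn_iota; case: i => /= i; lia.
Qed.

Lemma pred2_meet_inj m (i j k l : 'I_m) : (i < j)%N -> (k < l)%N ->
  (i, j) != (k, l) -> {in predI (pred2 i j) (pred2 k l) &, forall a b, a = b}.
Proof.
move=> ij kl neq a b; rewrite !inE /= -!val_eqE => /andP[ai ak] /andP[bi bk].
apply: val_inj; move: neq; rewrite xpair_eqE -!val_eqE.
simpl in *; lia.
Qed.

Section MinorIdeal.
Variables (K : fieldType) (m : nat) (d : 'I_m -> nat).
Hypothesis d_gt0 : forall i, (0 < d i)%N.

Local Notation I2 := (I2D K d).
Local Notation minor := (minorD K d).

Definition col (v : 'I_(m + m)) : 'I_m :=
  match split v with inl i | inr i => i end.

Lemma col_lshift i : col (lshift m i) = i.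
Proof. by rewrite /col (unsplitK (inl i)). Qed.

Lemma col_rshift i : col (rshift m i) = i.
Proof. by rewrite /col (unsplitK (inr i)). Qed.

Definition cols (T : pred 'I_m) : pred 'I_(m + m) := fun v => T (col v).

Lemma forall_in_I2D (P : {mpoly K[m + m]} -> Prop) :
  (forall i j : 'I_m, (i < j)%N -> P (minor i j)) -> {in I2, forall g, P g}.
Proof. by move=> Pij _ /mapP[[i j] + ->]; rewrite mem_I2D_pairs; apply: Pij. Qed.

Lemma minorD_binomial i j : Defs.binomial (minor i j).
Proof.
rewrite /Defs.binomial /minorD /xv /yv !mpolyXn -!mpolyXD.
apply: leq_trans (_ : (size [:: _; _] <= 2)%N) => //.
apply: uniq_leq_size; first exact: msupp_uniq.
move=> x /msuppB_le; rewrite mem_cat !msuppX !inE; exact.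
Qed.

Lemma minorD_neq0 i j : i != j -> minor i j != 0.
Proof.
move=> ij; pose a v : K := ((v == lshift m i) || (v == rshift m j))%:R.
apply/eqP => /(congr1 (meval a)).
rewrite /minorD /xv /yv rmorphB !rmorphM !rmorphXn /= !mevalXU /a !eqxx orbT.
have [lji ljrj rilj rirj] : [/\ lshift m j != lshift m i,
    lshift m j != rshift m j, rshift m i != lshift m i
  & rshift m i != rshift m j].
  have := ltn_ord i; have := ltn_ord j; move: ij.
  rewrite -!val_eqE; simpl; split; lia.
rewrite (negbTE lji) (negbTE ljrj) (negbTE rilj) (negbTE rirj) /= expr1n.
rewrite !expr0n !gtn_eqF // mulr0 subr0 !expr1n mulr1 rmorph0.
by move=> /eqP; rewrite oner_eq0.
Qed.

Lemma comp_keep_vars_minorD (T : pred 'I_m) i j :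
  minor i j \mPo keep_vars K (cols T) = if T i && T j then minor i j else 0.
Proof.
rewrite /minorD /xv /yv rmorphB !rmorphM !rmorphXn /= !comp_keep_varsXU.
rewrite /cols !col_lshift !col_rshift.
by case: (T i) (T j) => [] [] //=;
  rewrite !expr0n !gtn_eqF // ?mul0r ?mulr0 subrr.
Qed.

Lemma meval_I2D_diag (a : 'I_(m + m) -> K) b :
  (forall i, a (lshift m i) = a (rshift m i)) -> in_ideal I2 b -> b.@[a] = 0.
Proof.
move=> a_diag; apply: rmorph_in_ideal_eq0; apply: forall_in_I2D => i j _.
rewrite /minorD /xv /yv rmorphB !rmorphM !rmorphXn /= !mevalXU -!a_diag.
by rewrite [X in _ - X]mulrC subrr.
Qed.

Lemma comp_keep_vars_I2D_eq0 (T : pred 'I_m) b :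
  {in T &, forall i j, i = j} -> in_ideal I2 b -> b \mPo keep_vars K (cols T) = 0.
Proof.
move=> T_inj; apply: rmorph_in_ideal_eq0; apply: forall_in_I2D => i j ij.
rewrite /= comp_keep_vars_minorD; case: ifP => // /andP[Ti Tj].
by move: ij; rewrite (T_inj i j Ti Tj) ltnn.
Qed.

Lemma binomial_I2D_msupported (T : pred 'I_m) b :
  Defs.binomial b -> in_ideal I2 b -> b \mPo keep_vars K (cols T) != 0 ->
  {in msupp b, forall u, msupported (cols T) u}.
Proof.
move=> b_bin b_I2 bT; apply: binomial_msupported => //.
  by apply: meval_I2D_diag => // i; rewrite /cols col_lshift col_rshift.
by apply: contraNT bT => /hasPn bT; rewrite comp_keep_vars_eq0.
Qed.

Lemma has_minor_survivor B (i j : 'I_m) : (i < j)%N -> same_radical I2 B ->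
  has (fun b => b \mPo keep_vars K (cols (pred2 i j)) != 0) B.
Proof.
move=> ij I2_B; apply/negPn/negP => /hasPn B0.
have [k I2_Bk] : in_rad_ideal B (minor i j).
  apply/I2_B; exists 1%N; rewrite expr1; apply: in_ideal_mem.
  by apply/mapP; exists (i, j); rewrite ?mem_I2D_pairs.
have /eqP := rmorph_in_ideal_eq0 (fun b Bb => eqP (negbNE (B0 b Bb))) I2_Bk.
rewrite rmorphXn /= comp_keep_vars_minorD /= !eqxx orbT expf_eq0.
by rewrite (negbTE (minorD_neq0 (negbT (ltn_eqF ij)))) andbF.
Qed.

Lemma size_I2D : size I2 = 'C(m, 2).
Proof. by rewrite size_map size_I2D_pairs. Qed.

Lemma I2D_bar_lower_bound B :
  {in B, forall b, Defs.binomial b /\ in_ideal I2 b} -> same_radical I2 B ->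
  (size I2 <= size B)%N.
Proof.
move=> B_I2 I2_B.
pose survives (ij : 'I_m * 'I_m) b :=
  b \mPo keep_vars K (cols (pred2 ij.1 ij.2)) != 0.
pose pick ij := nth 0 B (find (survives ij) B).
have pickP ij : ij \in I2D_pairs m -> pick ij \in B /\ survives ij (pick ij).
  rewrite mem_I2D_pairs => /has_minor_survivor/(_ I2_B) B_ij.
  by split; [apply: mem_nth; rewrite -has_find | apply: nth_find].
have pick_inj : {in I2D_pairs m &, injective pick}.
  move=> [i j] [k l] ij_pairs kl_pairs pick_eq; apply/eqP/negPn/negP => neq.
  have [Bb ij_b] := pickP _ ij_pairs; have [_ kl_b] := pickP _ kl_pairs.
  rewrite -pick_eq in kl_b; set b := pick (i, j) in Bb ij_b kl_b.
  have [b_bin b_I2] := B_I2 b Bb.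
  have ij_supp := binomial_I2D_msupported b_bin b_I2 ij_b.
  have kl_supp := binomial_I2D_msupported b_bin b_I2 kl_b.
  have b_meet : b \mPo keep_vars K (cols (predI (pred2 i j) (pred2 k l))) = b.
    apply: comp_keep_vars_id => u bu.
    exact: (msupportedI (ij_supp u bu) (kl_supp u bu)).
  rewrite !mem_I2D_pairs in ij_pairs kl_pairs.
  have b0 : b = 0.
    by rewrite -b_meet comp_keep_vars_I2D_eq0 //; apply: pred2_meet_inj.
  by move: ij_b; rewrite /survives b0 rmorph0 eqxx.
rewrite size_map -(size_map pick); apply: uniq_leq_size.
  by rewrite map_inj_in_uniq // uniq_I2D_pairs.
by move=> _ /mapP[ij /pickP[]] ? _ ->.
Qed.

End MinorIdeal.

Theorem theorem4p8 (K : fieldType) (m : nat) (d : 'I_m -> nat) :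
  (2 <= m)%N -> (forall i, (0 < d i)%N) ->
  bar_eq (I2D K d) (m * (m - 1) %/ 2).
Proof.
move=> _ d_gt0; rewrite subn1 divn2 -bin2 -(size_I2D K d).
split=> [|B B_I2 I2_B]; last exact: I2D_bar_lower_bound.
exists (I2D K d); split=> //; split=> // b b_I2; split; last exact: in_ideal_mem.
by apply: forall_in_I2D b_I2 => i j _; apply: minorD_binomial.
Qed.
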